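(* In a pointed protomodular category, for an object $X$: if $X$ is strong-complete then it is complete${}^*$; if it is complete${}^*$ then it is complete; and if it is complete then it is proto-complete.
   Context: A pointed category with finite limits is protomodular if the split short five lemma holds. A normal monomorphism is a kernel of some morphism; a protosplit monomorphism is a kernel of a split epimorphism. A monomorphism $m:S\to Y$ is Bourn-normal if there is an equivalence relation $(R,r_1,r_2)$ on $Y$ and a morphism $\tilde m:S\times S\to R$ with $r_1\tilde m=m\pi_1$, $r_2\tilde m=m\pi_2$ such that the square $r_1\tilde m=m\pi_1$ is a pullback. An object $X$ is: proto-complete if every protosplit monomorphism with domain $X$ is a split monomorphism; complete if every normal monomorphism with domain $X$ is a split monomorphism; complete${}^*$ if every Bourn-normal monomorphism with domain $X$ is a split monomorphism; strong-complete if every protosplit monomorphism with domain $X$ is a split monomorphism with a unique retraction. *)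

Set Implicit Arguments.
Unset Strict Implicit.

Record Category := {
  Obj :> Type;
  Hom : Obj -> Obj -> Type;
  idm : forall A, Hom A A;
  comp : forall A B C, Hom B C -> Hom A B -> Hom A C;
  comp_id_l : forall A B (f : Hom A B), comp (idm B) f = f;
  comp_id_r : forall A B (f : Hom A B), comp f (idm A) = f;
  comp_assoc : forall A B C D (h : Hom C D) (g : Hom B C) (f : Hom A B),
      comp h (comp g f) = comp (comp h g) f
}.

Arguments Hom {c} _ _.
Arguments idm {c} A.
Arguments comp {c A B C} _ _.

Section Notions.
Variable C : Category.

Definition mono {A B : C} (m : Hom A B) : Prop :=
  forall T (x y : Hom T A), comp m x = comp m y -> x = y.

Definition iso {A B : C} (f : Hom A B) : Prop :=
  exists g : Hom B A, comp g f = idm A /\ comp f g = idm B.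

Definition split_mono {A B : C} (m : Hom A B) : Prop :=
  exists r : Hom B A, comp r m = idm A.

Definition split_mono_unique {A B : C} (m : Hom A B) : Prop :=
  exists r : Hom B A, comp r m = idm A /\
    forall r' : Hom B A, comp r' m = idm A -> r' = r.

Definition split_epi {A B : C} (f : Hom A B) : Prop :=
  exists s : Hom B A, comp f s = idm B.

Definition is_pullback {A B D P : C} (f : Hom A D) (g : Hom B D)
    (p1 : Hom P A) (p2 : Hom P B) : Prop :=
  comp f p1 = comp g p2 /\
  forall T (x : Hom T A) (y : Hom T B), comp f x = comp g y ->
    exists u : Hom T P, (comp p1 u = x /\ comp p2 u = y) /\
      forall u' : Hom T P, comp p1 u' = x -> comp p2 u' = y -> u' = u.

Definition has_pullbacks : Prop :=
  forall (A B D : C) (f : Hom A D) (g : Hom B D),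
    exists (P : C) (p1 : Hom P A) (p2 : Hom P B), is_pullback f g p1 p2.

Definition is_product {A B P : C} (p1 : Hom P A) (p2 : Hom P B) : Prop :=
  forall T (x : Hom T A) (y : Hom T B),
    exists u : Hom T P, (comp p1 u = x /\ comp p2 u = y) /\
      forall u' : Hom T P, comp p1 u' = x -> comp p2 u' = y -> u' = u.

(* (R, r1, r2) is an (internal) equivalence relation on Y: r1, r2 jointly
   monic, and for every T the relation on Hom T Y induced by R is reflexive,
   symmetric and transitive. *)
Definition equivalence_relation {R Y : C} (r1 r2 : Hom R Y) : Prop :=
  (forall T (x y : Hom T R), comp r1 x = comp r1 y -> comp r2 x = comp r2 y -> x = y) /\
  (exists d : Hom Y R, comp r1 d = idm Y /\ comp r2 d = idm Y) /\
  (exists s : Hom R R, comp r1 s = r2 /\ comp r2 s = r1) /\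
  (forall T (a b : Hom T R), comp r2 a = comp r1 b ->
     exists c : Hom T R, comp r1 c = comp r1 a /\ comp r2 c = comp r2 b).

End Notions.

Arguments mono {C A B} _.
Arguments iso {C A B} _.
Arguments split_mono {C A B} _.
Arguments split_mono_unique {C A B} _.
Arguments split_epi {C A B} _.
Arguments is_pullback {C A B D P} _ _ _ _.
Arguments is_product {C A B P} _ _.
Arguments equivalence_relation {C R Y} _ _.

Record PointedCategory := {
  pcat :> Category;
  zero_obj : pcat;
  to_zero : forall X : pcat, Hom X zero_obj;
  from_zero : forall X : pcat, Hom zero_obj X;
  to_zero_unique : forall (X : pcat) (f : Hom X zero_obj), f = to_zero X;
  from_zero_unique : forall (X : pcat) (f : Hom zero_obj X), f = from_zero X
}.

Section Pointed.
Variable C : PointedCategory.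

Definition zero_map (X Y : C) : Hom X Y := comp (@from_zero C Y) (@to_zero C X).

(* Finite limits: a terminal object (the zero object) and all pullbacks. *)
Definition finitely_complete : Prop := has_pullbacks C.

Definition is_kernel {K X Z : C} (k : Hom K X) (f : Hom X Z) : Prop :=
  comp f k = zero_map K Z /\
  forall T (x : Hom T X), comp f x = zero_map T Z ->
    exists u : Hom T K, comp k u = x /\
      forall u' : Hom T K, comp k u' = x -> u' = u.

(* Split short five lemma (pointed version): given a morphism of split
   extensions
      K --k--> A <==p,s==> B
      |u       |v          |w
      K'--k'-> A'<==p',s'=> B'
   with k a kernel of p, k' a kernel of p', p s = 1, p' s' = 1,
   v k = k' u, p' v = w p, v s = s' w, if u and w are isomorphisms then so
   is v. *)
Definition protomodular : Prop :=
  forall (K A B K' A' B' : C)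
    (k : Hom K A) (p : Hom A B) (s : Hom B A)
    (k' : Hom K' A') (p' : Hom A' B') (s' : Hom B' A')
    (u : Hom K K') (v : Hom A A') (w : Hom B B'),
    is_kernel k p -> comp p s = idm B ->
    is_kernel k' p' -> comp p' s' = idm B' ->
    comp v k = comp k' u -> comp p' v = comp w p -> comp v s = comp s' w ->
    iso u -> iso w -> iso v.

Definition normal_mono {S Y : C} (m : Hom S Y) : Prop :=
  exists (Z : C) (f : Hom Y Z), is_kernel m f.

Definition protosplit_mono {S Y : C} (m : Hom S Y) : Prop :=
  exists (Z : C) (f : Hom Y Z), split_epi f /\ is_kernel m f.

Definition bourn_normal {S Y : C} (m : Hom S Y) : Prop :=
  mono m /\
  exists (R : C) (r1 r2 : Hom R Y), equivalence_relation r1 r2 /\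
  exists (SS : C) (pi1 pi2 : Hom SS S), is_product pi1 pi2 /\
  exists mt : Hom SS R,
    comp r1 mt = comp m pi1 /\ comp r2 mt = comp m pi2 /\
    is_pullback r1 m mt pi1.

Definition proto_complete (X : C) : Prop :=
  forall (Y : C) (m : Hom X Y), protosplit_mono m -> split_mono m.

Definition complete (X : C) : Prop :=
  forall (Y : C) (m : Hom X Y), normal_mono m -> split_mono m.

Definition complete_star (X : C) : Prop :=
  forall (Y : C) (m : Hom X Y), bourn_normal m -> split_mono m.

Definition strong_complete (X : C) : Prop :=
  forall (Y : C) (m : Hom X Y), protosplit_mono m -> split_mono_unique m.

End Pointed.

Arguments zero_map {C} X Y.
Arguments is_kernel {C K X Z} _ _.
Arguments normal_mono {C S Y} _.
Arguments protosplit_mono {C S Y} _.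
Arguments bourn_normal {C S Y} _.
Arguments proto_complete {C} X.
Arguments complete {C} X.
Arguments complete_star {C} X.
Arguments strong_complete {C} X.

(* The projection pi1 : X * X -> X is split by the diagonal and has kernel
   <0, 1>; when X is strong-complete every retraction of that kernel equals pi2.
   For m : X -> Y Bourn-normal to R via mt : X * X -> R, the pullback square
   turns <0, 1> into a kernel mt <0, 1> of r1, split by the reflexivity map
   d : Y -> R.  A retraction rho of it thus satisfies rho mt = pi2, and since
   mt sends the diagonal to d m, rho d retracts m.  Conversely a kernel of f is
   Bourn-normal to the kernel pair of f, and a kernel of a split epimorphism is
   in particular a kernel. *)


Section Completeness.
Variable C : PointedCategory.

Lemma zero_map_comp (T X Z : C) (x : Hom T X) :
  comp (zero_map X Z) x = zero_map T Z.
Proof.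
  unfold zero_map. rewrite <- comp_assoc. f_equal. apply to_zero_unique.
Qed.

Lemma comp_zero_map (X Y Z : C) (g : Hom Y Z) :
  comp g (zero_map X Y) = zero_map X Z.
Proof.
  unfold zero_map. rewrite comp_assoc. f_equal. apply from_zero_unique.
Qed.

Lemma product_hom_ext {A B P T : C} {p1 : Hom P A} {p2 : Hom P B} {x y : Hom T P} :
  is_product p1 p2 -> comp p1 x = comp p1 y -> comp p2 x = comp p2 y -> x = y.
Proof.
  intros Hprod E1 E2.
  destruct (Hprod T (comp p1 y) (comp p2 y)) as [u [_ Hu]].
  rewrite (Hu x E1 E2), (Hu y eq_refl eq_refl). reflexivity.
Qed.

Lemma pullback_to_zero_product {A B P : C} {p1 : Hom P A} {p2 : Hom P B} :
  is_pullback (to_zero A) (to_zero B) p1 p2 -> is_product p1 p2.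
Proof.
  intros [_ Hpb] T x y. apply Hpb.
  rewrite (to_zero_unique (comp _ x)), (to_zero_unique (comp _ y)). reflexivity.
Qed.

Lemma kernel_mono {K X Z : C} {k : Hom K X} {f : Hom X Z} :
  is_kernel k f -> mono k.
Proof.
  intros [Hk0 Hk] T x y E.
  assert (Hx : comp f (comp k x) = zero_map T Z)
    by (rewrite comp_assoc, Hk0; apply zero_map_comp).
  destruct (Hk T (comp k x) Hx) as [u [_ Hu]].
  rewrite (Hu x eq_refl), (Hu y (eq_sym E)). reflexivity.
Qed.

Lemma kernel_pair_equivalence {R Y Z : C} {f : Hom Y Z} {r1 r2 : Hom R Y} :
  is_pullback f f r1 r2 -> equivalence_relation r1 r2.
Proof.
  intros [Hc Hpb]. split; [|split; [|split]].
  - intros T x y E1 E2.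
    assert (Hx : comp f (comp r1 x) = comp f (comp r2 x))
      by (rewrite !comp_assoc, Hc; reflexivity).
    destruct (Hpb T _ _ Hx) as [u [_ Hu]].
    rewrite (Hu x eq_refl eq_refl), (Hu y (eq_sym E1) (eq_sym E2)). reflexivity.
  - destruct (Hpb Y (idm Y) (idm Y) eq_refl) as [d [[E1 E2] _]].
    exists d. split; assumption.
  - destruct (Hpb R r2 r1 (eq_sym Hc)) as [s [[E1 E2] _]].
    exists s. split; assumption.
  - intros T a b E.
    assert (Hab : comp f (comp r1 a) = comp f (comp r2 b)).
    { rewrite !comp_assoc, Hc, <- !comp_assoc, E, !comp_assoc, Hc. reflexivity. }
    destruct (Hpb T _ _ Hab) as [c [[E1 E2] _]].
    exists c. split; assumption.
Qed.

Lemma product_coordinate_kernel {A B P : C} {p1 : Hom P A} {p2 : Hom P B}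
    {k : Hom B P} :
  is_product p1 p2 -> comp p1 k = zero_map B A -> comp p2 k = idm B ->
  is_kernel k p1.
Proof.
  intros Hprod Hk1 Hk2. split; [exact Hk1|].
  intros T x Hx. exists (comp p2 x). split.
  - apply (product_hom_ext Hprod).
    + rewrite comp_assoc, Hk1, zero_map_comp. symmetry. exact Hx.
    + rewrite comp_assoc, Hk2, comp_id_l. reflexivity.
  - intros w Hw. rewrite <- Hw, comp_assoc, Hk2, comp_id_l. reflexivity.
Qed.

Lemma pullback_kernel {A B D P K : C} {f : Hom A D} {g : Hom B D}
    {p1 : Hom P A} {p2 : Hom P B} {k : Hom K P} :
  is_pullback f g p1 p2 -> is_kernel k p2 -> is_kernel (comp p1 k) f.
Proof.
  intros [Hc Hpb] [Hk0 Hk]. split.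
  - rewrite comp_assoc, Hc, <- comp_assoc, Hk0. apply comp_zero_map.
  - intros T x Hx.
    assert (Hx0 : comp f x = comp g (zero_map T B))
      by (rewrite comp_zero_map; exact Hx).
    destruct (Hpb T x _ Hx0) as [u [[Hu1 Hu2] Hu]].
    destruct (Hk T u Hu2) as [v [Hv Hvu]].
    exists v. split.
    + rewrite <- comp_assoc, Hv. exact Hu1.
    + intros w Hw. apply Hvu, Hu.
      * rewrite comp_assoc. exact Hw.
      * rewrite comp_assoc, Hk0. apply zero_map_comp.
Qed.

Lemma retraction_unique {A B : C} {m : Hom A B} {r r' : Hom B A} :
  split_mono_unique m -> comp r m = idm A -> comp r' m = idm A -> r = r'.
Proof.
  intros [r0 [_ Hr0]] Hr Hr'. rewrite (Hr0 r Hr), (Hr0 r' Hr'). reflexivity.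
Qed.

Lemma strong_complete_complete_star (X : C) :
  strong_complete X -> complete_star X.
Proof.
  intros HS Y m [_ [R [r1 [r2 [[Hjm [[d [Hd1 Hd2]] _]]
    [SS [pi1 [pi2 [Hprod [mt [E1 [E2 Hpb]]]]]]]]]]]].
  destruct (Hprod X (zero_map X X) (idm X)) as [k [[Hk1 Hk2] _]].
  destruct (Hprod X (idm X) (idm X)) as [dl [[Hdl1 Hdl2] _]].
  assert (Hk : is_kernel k pi1) by exact (product_coordinate_kernel Hprod Hk1 Hk2).
  assert (Hk_unique : split_mono_unique k).
  { apply HS. exists X, pi1. split; [exists dl; exact Hdl1 | exact Hk]. }
  destruct (HS R (comp mt k)) as [rho [Hrho _]].
  { exists Y, r1. split; [exists d; exact Hd1 | exact (pullback_kernel Hpb Hk)]. }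
  assert (Hrho_mt : comp rho mt = pi2).
  { apply (retraction_unique Hk_unique); [|exact Hk2].
    rewrite <- comp_assoc. exact Hrho. }
  assert (Hmt_dl : comp mt dl = comp d m).
  { apply Hjm.
    - rewrite !comp_assoc, E1, Hd1, <- comp_assoc, Hdl1, comp_id_l, comp_id_r.
      reflexivity.
    - rewrite !comp_assoc, E2, Hd2, <- comp_assoc, Hdl2, comp_id_l, comp_id_r.
      reflexivity. }
  exists (comp rho d).
  rewrite <- comp_assoc, <- Hmt_dl, comp_assoc, Hrho_mt. exact Hdl2.
Qed.

Lemma kernel_pullback_kernel_pair {S Y Z R SS : C} {m : Hom S Y} {f : Hom Y Z}
    {r1 r2 : Hom R Y} {pi1 pi2 : Hom SS S} {mt : Hom SS R} :
  is_kernel m f -> is_pullback f f r1 r2 -> is_product pi1 pi2 ->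
  comp r1 mt = comp m pi1 -> comp r2 mt = comp m pi2 ->
  is_pullback r1 m mt pi1.
Proof.
  intros Hker Hkp Hprod E1 E2.
  pose proof (kernel_mono Hker) as Hm.
  destruct (kernel_pair_equivalence Hkp) as [Hjm _].
  destruct Hker as [Hf0 Hf].
  split; [exact E1|].
  intros T x y Hxy.
  assert (Hz : comp f (comp r2 x) = zero_map T Z).
  { rewrite comp_assoc, <- (proj1 Hkp), <- comp_assoc, Hxy, comp_assoc, Hf0.
    apply zero_map_comp. }
  destruct (Hf T _ Hz) as [z [Hmz _]].
  destruct (Hprod T y z) as [u [[Hu1 Hu2] _]].
  exists u. split; [split|].
  - apply Hjm.
    + rewrite comp_assoc, E1, <- comp_assoc, Hu1. symmetry. exact Hxy.
    + rewrite comp_assoc, E2, <- comp_assoc, Hu2. exact Hmz.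
  - exact Hu1.
  - intros u' H1 H2. apply (product_hom_ext Hprod).
    + rewrite Hu1. exact H2.
    + rewrite Hu2. apply Hm.
      rewrite Hmz, <- H1, (comp_assoc r2 mt u'), E2, comp_assoc. reflexivity.
Qed.

Lemma normal_mono_bourn_normal {S Y : C} (m : Hom S Y) :
  finitely_complete C -> normal_mono m -> bourn_normal m.
Proof.
  intros Hlim [Z [f Hker]].
  split; [exact (kernel_mono Hker)|].
  destruct (Hlim Y Y Z f f) as [R [r1 [r2 Hkp]]].
  destruct (Hlim S S _ (to_zero S) (to_zero S)) as [SS [pi1 [pi2 Hpp]]].
  pose proof (pullback_to_zero_product Hpp) as Hprod.
  assert (Hm_pi : comp f (comp m pi1) = comp f (comp m pi2))
    by (rewrite !comp_assoc, (proj1 Hker), !zero_map_comp; reflexivity).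
  destruct (proj2 Hkp SS _ _ Hm_pi) as [mt [[E1 E2] _]].
  exists R, r1, r2. split; [exact (kernel_pair_equivalence Hkp)|].
  exists SS, pi1, pi2. split; [exact Hprod|].
  exists mt. split; [exact E1|]. split; [exact E2|].
  exact (kernel_pullback_kernel_pair Hker Hkp Hprod E1 E2).
Qed.

Lemma complete_star_complete (X : C) :
  finitely_complete C -> complete_star X -> complete X.
Proof.
  intros Hlim HC Y m Hm. apply HC, normal_mono_bourn_normal; assumption.
Qed.

Lemma protosplit_normal_mono {S Y : C} (m : Hom S Y) :
  protosplit_mono m -> normal_mono m.
Proof.
  intros [Z [f [_ Hker]]]. exists Z, f. exact Hker.
Qed.

Lemma complete_proto_complete (X : C) : complete X -> proto_complete X.
Proof.
  intros HC Y m Hm. apply HC, protosplit_normal_mono, Hm.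
Qed.

End Completeness.

Theorem proposition4p7 (C : PointedCategory)
  (Hlim : finitely_complete C) (Hproto : protomodular C) (X : C) :
  (strong_complete X -> complete_star X) /\
  (complete_star X -> complete X) /\
  (complete X -> proto_complete X).
Proof.
  split; [|split].
  - apply strong_complete_complete_star.
  - apply complete_star_complete, Hlim.
  - apply complete_proto_complete.
Qed.
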